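(* Let $n\in\mathbb{N}$. For every $\mathbf{p}=(\mathbf{p}_0,\dots,\mathbf{p}_{n-1})\in\mathbb{F}_2^{n}$, the $\mu_n$-measure of the set $\{r\in Q_n: p(r)_k=\mathbf{p}_k \text{ for all } 0\le k<n\}$ equals $2^{-n}$.
   Context: $\mathbb{F}_2((x^{-1}))$ is the field of formal series $r=\sum_{z\in\mathbb{Z}}a_zx^z$, $a_z\in\mathbb{F}_2$, with $a_z\ne0$ for only finitely many positive $z$; $\deg(r)=\max\{z:a_z\ne0\}$. The polynomial part is $[r]=\sum_{z\ge0}a_zx^z$. $S(r)=\frac{r}{x+1}$ if $[r](1)=0$ and $S(r)=\frac{xr}{x+1}$ if $[r](1)=1$; $p(r)_k=[S^k(r)](1)$. $Q_n=\{r:\deg(r)=n\}$ and $\mu_n$ is the probability measure on $Q_n$ under which the coefficients $a_{n-1},a_{n-2},\dots$ are independent and uniform in $\mathbb{F}_2$. *)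

From HB Require Import structures.
From mathcomp Require Import all_boot all_order all_algebra.
From mathcomp Require Import all_classical all_reals all_analysis.
Set Implicit Arguments. Unset Strict Implicit. Unset Printing Implicit Defensive.
Import Order.TTheory GRing.Theory Num.Theory.
Local Open Scope ring_scope.

(* Elements of F_2((x^{-1})), with F_2 = bool (addition = xor).
   A pair  (D, f)  with D : int and f : nat -> bool represents
        r = x^D * F(x^{-1}),   F(y) = sum_{m>=0} f m * y^m  in F_2[[y]],
   i.e. r = sum_{m>=0} f m * x^(D - m).  Every element of F_2((x^{-1})) has
   such a representation (D an upper bound of its degree). *)
Record lseries := LS { ls_top : int; ls_coef : nat -> bool }.

(* [r](1): the polynomial part evaluated at 1 = xor of the coefficients of
   x^z with z >= 0, i.e. of f m for D - m >= 0. *)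
Definition polypart_at1 (r : lseries) : bool :=
  match ls_top r with
  | Posz d => \big[addb/false]_(m < d.+1) ls_coef r m
  | Negz _ => false
  end.

(* Multiplication by 1/(1+y) in F_2[[y]]: prefix xors. *)
Definition div1y (f : nat -> bool) : nat -> bool :=
  fun m => \big[addb/false]_(i < m.+1) f i.

(* Since x + 1 = x (1 + y) with y = x^{-1}:
     r/(x+1)   = x^(D-1) F(y)/(1+y),
     x r/(x+1) = x^D     F(y)/(1+y). *)
Definition S (r : lseries) : lseries :=
  if polypart_at1 r then LS (ls_top r) (div1y (ls_coef r))
  else LS (ls_top r - 1) (div1y (ls_coef r)).

Definition pseq (r : lseries) (k : nat) : bool := polypart_at1 (iter k S r).

Definition bdigit {R : realType} (m : nat) (t : R) : bool :=
  odd (Num.truncn (t * 2 ^+ m)).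

(* The element of Q_n with a_n = 1 and a_{n-m} = m-th binary digit of t
   (m >= 1).  If t is uniform on [0,1), the digits are i.i.d. uniform bits,
   so mu_n is the push-forward of Lebesgue measure on [0,1) by this map. *)
Definition rQ {R : realType} (n : nat) (t : R) : lseries :=
  LS (Posz n) (fun m => if m == 0%N then true else bdigit m t).

Definition mu {R : realType} (n : nat) (A : lseries -> Prop) : \bar R :=
  (@lebesgue_measure R) [set t : R | (0 <= t < 1) /\ A (rQ n t)].

From HB Require Import structures.
From mathcomp Require Import all_boot all_order all_algebra.
From mathcomp Require Import all_classical all_reals all_analysis.
Import Order.TTheory GRing.Theory Num.Theory.
Local Open Scope ring_scope.

(* For t uniform in [0,1), the series rQ n t has the same pseq as
   x^n + N(x), where N = floor (2^n t) and N(x) is the polynomial whose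
   coefficients are the binary digits of N: only the coefficients of
   nonnegative powers of x ever influence p(r).  The map sending N < 2^n to the
   first n outputs p_0, ..., p_(n-1) is injective: p_0 is the parity of all
   coefficients, and S acts on the coefficient sequence by division by
   1 + 1/x (prefix xors), which is invertible, so by induction the outputs
   recover the coefficients one at a time.  Hence it is a bijection onto
   F_2^n, and each pattern is the image of exactly one N, i.e. of a dyadic
   interval [N/2^n, (N+1)/2^n) of length 2^-n. *)

Lemma pseqS r k : pseq r k.+1 = pseq (S r) k.
Proof. by rewrite /pseq iterSr. Qed.

Lemma pseq0_LS (D : nat) (f : nat -> bool) :
  pseq (LS D f) 0 = \big[addb/false]_(m < D.+1) f m.
Proof. by []. Qed.

Lemma S_LS (D : nat) (f : nat -> bool) : (0 < D)%N ->
  S (LS D f) = LS (if pseq (LS D f) 0 then D else D.-1) (div1y f).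
Proof.
by move=> D_gt0; rewrite /S /pseq /=; case: ifP; rewrite // predn_int.
Qed.

Lemma div1y0 (f : nat -> bool) : div1y f 0 = f 0.
Proof. by rewrite /div1y big_ord1. Qed.

Lemma div1yS (f : nat -> bool) m : div1y f m.+1 = div1y f m (+) f m.+1.
Proof. by rewrite /div1y big_ord_recr. Qed.

Lemma div1y_inj (D : nat) (f f' : nat -> bool) :
  (forall m, (m <= D)%N -> div1y f m = div1y f' m) ->
  forall m, (m <= D)%N -> f m = f' m.
Proof.
move=> eq_div [|m] mD; first by rewrite -div1y0 eq_div // div1y0.
by have := eq_div m.+1 mD; rewrite !div1yS (eq_div m (ltnW mD)) => /addbI.
Qed.

Lemma div1y_sum_split (f : nat -> bool) (D m : nat) : (m <= D)%N ->
  \big[addb/false]_(i < D.+1) f i =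
  div1y f m (+) \big[addb/false]_(m.+1 <= i < D.+1) f i.
Proof.
by move=> mD; rewrite /div1y -!(big_mkord xpredT f) (@big_cat_nat _ _ _ m.+1).
Qed.

(* p_0 is the parity of f on [0, D], so it fixes the prefix xors div1y f m
   for m > k; induction on S (LS D f) = LS D' (div1y f) fixes them below. *)
Lemma pseq_LS_coef_inj k : forall (D : nat) (f f' : nat -> bool),
  (k <= D)%N -> f 0 = f' 0 -> (forall m, (k < m <= D)%N -> f m = f' m) ->
  (forall i, (i < k)%N -> pseq (LS D f) i = pseq (LS D f') i) ->
  forall m, (m <= D)%N -> f m = f' m.
Proof.
elim: k => [|k IH] D f f' kD eq_f0 eq_tail eq_pseq.
  by move=> [|m] mD //; apply: eq_tail.
have eq_div_tail m : (k < m <= D)%N -> div1y f m = div1y f' m.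
  move=> /andP[km mD].
  apply: (@addIb (\big[addb/false]_(m.+1 <= i < D.+1) f i)).
  rewrite -div1y_sum_split // -pseq0_LS eq_pseq // pseq0_LS.
  rewrite (div1y_sum_split f' _ _ mD).
  congr (_ (+) _); apply: eq_big_nat => i /andP[mi iD]; apply/esym/eq_tail.
  by rewrite (leq_ltn_trans km mi) -ltnS.
have D_gt0 : (0 < D)%N by apply: leq_trans kD.
set D' := if pseq (LS D f) 0 then D else D.-1.
have kD' : (k <= D')%N.
  by rewrite /D'; case: ifP => _; [exact: ltnW | rewrite -ltnS prednK].
have D'D : (D' <= D)%N by rewrite /D'; case: ifP => // _; apply: leq_pred.
have eq_div : forall m, (m <= D')%N -> div1y f m = div1y f' m.
  apply: IH => //; first by rewrite !div1y0.
    by move=> m /andP[km mD']; apply: eq_div_tail; rewrite km (leq_trans mD').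
  move=> i ik; have := eq_pseq i.+1 ik; rewrite !pseqS !S_LS //.
  by rewrite -(eq_pseq 0%N).
apply: div1y_inj => m mD; case: (leqP m D') => [|D'm]; first exact: eq_div.
by apply: eq_div_tail; rewrite mD (leq_ltn_trans kD').
Qed.

(* r - r' has negative degree, a property that S preserves. *)
Definition same_polypart (r r' : lseries) :=
  ls_top r = ls_top r' /\
  forall m : nat, m%:Z <= ls_top r -> ls_coef r m = ls_coef r' m.

Lemma same_polypart_at1 r r' :
  same_polypart r r' -> polypart_at1 r = polypart_at1 r'.
Proof.
case: r r' => [D f] [D' f'] [/= <- eq_f]; rewrite /polypart_at1 /=.
case: D eq_f => [d|d] eq_f //; apply: eq_bigr => i _; apply: eq_f.
by rewrite lez_nat -ltnS.
Qed.

Lemma same_polypart_S r r' : same_polypart r r' -> same_polypart (S r) (S r').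
Proof.
move=> same; have eq_at1 := same_polypart_at1 _ _ same.
case: same; case: r r' eq_at1 => [D f] [D' f'] /= eq_at1 eq_D eq_f; subst D'.
have eq_div m : m%:Z <= D -> div1y f m = div1y f' m.
  move=> mD; apply: eq_bigr => i _; apply: eq_f; apply: le_trans mD.
  by rewrite lez_nat -ltnS.
rewrite /S -eq_at1; case: ifP => _; split => //= m mD; apply: eq_div.
by apply: le_trans mD _; rewrite gerBl.
Qed.

Lemma same_polypart_pseq r r' k : same_polypart r r' -> pseq r k = pseq r' k.
Proof.
elim: k r r' => [|k IH] r r' same; first exact: same_polypart_at1.
by rewrite !pseqS; apply/IH/same_polypart_S.
Qed.

Lemma nat_bits_inj n N N' : (N < 2 ^ n)%N -> (N' < 2 ^ n)%N ->
  (forall i, (i < n)%N -> odd (N %/ 2 ^ i) = odd (N' %/ 2 ^ i)) -> N = N'.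
Proof.
elim: n N N' => [|n IH] N N' ltN ltN' eq_bits.
  by move: ltN ltN'; rewrite !ltnS !leqn0 => /eqP-> /eqP->.
have eq_odd := eq_bits 0%N isT; rewrite !divn1 in eq_odd.
have eq_half : N./2 = N'./2.
  apply: IH; rewrite -?divn2 ?ltn_divLR -?expnSr //.
  by move=> i lt_in; have := eq_bits i.+1 lt_in; rewrite expnS !divnMA.
by rewrite -(odd_double_half N) -(odd_double_half N') eq_odd eq_half.
Qed.

Definition bin_series (n N : nat) : lseries :=
  LS n (fun m => if m == 0%N then true else odd (N %/ 2 ^ (n - m))).

Lemma bin_series_pattern_inj n :
  injective (fun N : 'I_(2 ^ n) => [ffun k : 'I_n => pseq (bin_series n N) k]).
Proof.
move=> N N' /ffunP eq_pattern; apply/val_inj/(@nat_bits_inj n).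
- exact: ltn_ord.
- exact: ltn_ord.
move=> i lt_in.
have := @pseq_LS_coef_inj n n (ls_coef (bin_series n N))
  (ls_coef (bin_series n N')) (leqnn n) erefl _ _ (n - i)%N (leq_subr _ _).
rewrite /= subKn ?(ltnW lt_in) // subn_eq0 leqNgt lt_in; apply.
  by move=> m /andP[lt_nm le_mn]; rewrite ltnNge le_mn in lt_nm.
by move=> k lt_kn; have := eq_pattern (Ordinal lt_kn); rewrite !ffunE.
Qed.

Lemma bin_series_pattern_unique n (p : 'I_n -> bool) :
  exists N0 : 'I_(2 ^ n), forall N : 'I_(2 ^ n),
    (forall k : 'I_n, pseq (bin_series n N) k = p k) <-> N = N0.
Proof.
have card_eq : (#|{ffun 'I_n -> bool}| <= #|'I_(2 ^ n)|)%N.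
  by rewrite card_ffun card_bool !card_ord.
have /codomP[N0 eq_N0] :=
  inj_card_onto (bin_series_pattern_inj n) card_eq (finfun p).
exists N0 => N; split=> [eq_p | ->{N} k].
  apply: bin_series_pattern_inj; rewrite -eq_N0.
  by apply/ffunP => k; rewrite !ffunE.
by move/ffunP: eq_N0 => /(_ k); rewrite !ffunE => ->.
Qed.

Lemma truncn_divn (R : archiNumDomainType) (x : R) (d : nat) :
  0 <= x -> (0 < d)%N -> Num.truncn x = (Num.truncn (x * d%:R) %/ d)%N.
Proof.
move=> x0 d_gt0; set M := Num.truncn (x * d%:R).
have d0 : 0 < d%:R :> R by rewrite ltr0n.
have /andP[M_le M_gt] := truncn_itv (mulr_ge0 x0 (ltW d0)).
apply: truncn_def; apply/andP; split.
  rewrite -(ler_pM2r d0) -natrM; apply: le_trans M_le.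
  by rewrite ler_nat leq_divM.
rewrite -(ltr_pM2r d0) -natrM; apply: lt_le_trans M_gt _.
by rewrite ler_nat ltn_ceil.
Qed.

Lemma bdigit_truncn (R : realType) (t : R) (m n : nat) :
  0 <= t -> (m <= n)%N ->
  bdigit m t = odd (Num.truncn (t * 2 ^+ n) %/ 2 ^ (n - m)).
Proof.
move=> t0 mn; rewrite /bdigit (@truncn_divn _ _ (2 ^ (n - m))) ?expn_gt0 //.
  by rewrite -mulrA natrX -exprD subnKC.
by rewrite mulr_ge0 ?exprn_ge0.
Qed.

Lemma pseq_rQ (R : realType) (n : nat) (t : R) k : 0 <= t ->
  pseq (rQ n t) k = pseq (bin_series n (Num.truncn (t * 2 ^+ n))) k.
Proof.
move=> t0; apply: same_polypart_pseq; split=> //= m; rewrite lez_nat => mn.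
by case: eqP => // _; apply: bdigit_truncn.
Qed.

Lemma truncn_mul_lt (R : archiNumDomainType) (t : R) (N : nat) :
  0 <= t -> (0 < N)%N -> (Num.truncn (t * N%:R) < N)%N = (t < 1).
Proof.
move=> t0 N_gt0; rewrite truncn_lt_nat ?mulr_ge0 //.
by rewrite -{2}(mul1r N%:R) ltr_pM2r ?ltr0n.
Qed.

Lemma lebesgue_truncn_level (R : realType) (c : R) (N : nat) : 0 < c ->
  lebesgue_measure [set t : R | 0 <= t /\ Num.truncn (t * c) = N]%classic =
  (c^-1)%:E.
Proof.
move=> c0.
have -> : [set t : R | 0 <= t /\ Num.truncn (t * c) = N]%classic =
          [set` (`[N%:R / c, N.+1%:R / c[)%R]%classic.
  apply/seteqP; split => t /=; rewrite in_itv /=.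
    move=> [t0 <-]; rewrite ler_pdivrMr // ltr_pdivlMr //.
    exact: truncn_itv (mulr_ge0 t0 (ltW c0)).
  move=> /andP[Nt tN].
  have t0 : 0 <= t.
    by apply: le_trans Nt; exact: divr_ge0 (ler0n _ _) (ltW c0).
  split=> //; apply/eqP; rewrite truncn_eq ?mulr_ge0 ?(ltW c0) //.
  by rewrite -ler_pdivrMr // -ltr_pdivlMr // Nt tN.
rewrite lebesgue_measure_itv /= lte_fin ltr_pM2r ?invr_gt0 // ltr_nat ltnSn.
by rewrite -EFinD -mulrBl -natr1 addrAC subrr add0r mul1r.
Qed.

Theorem lemma2p8 (R : realType) (n : nat) (p : 'I_n -> bool) :
  @mu R n (fun r => forall k : 'I_n, pseq r k = p k) = ((2 ^+ n)^-1 : R)%:E.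
Proof.
have [N0 eq_N0] := bin_series_pattern_unique n p.
have pos2n : 0 < 2 ^+ n :> R by rewrite exprn_gt0.
have lt_trunc (t : R) :
    0 <= t -> (Num.truncn (t * 2 ^+ n) < 2 ^ n)%N = (t < 1).
  by move=> t0; rewrite -natrX truncn_mul_lt ?expn_gt0.
rewrite /mu -(@lebesgue_truncn_level R _ N0 pos2n).
congr (lebesgue_measure _).
apply/seteqP; split => t /= [].
  move=> /andP[t0 t1] eq_p; split=> //.
  have lt_N : (Num.truncn (t * 2 ^+ n) < 2 ^ n)%N by rewrite lt_trunc.
  by apply: (congr1 val ((eq_N0 (Ordinal lt_N)).1 _)) => k; rewrite -pseq_rQ.
move=> t0 eq_t; have t1 : t < 1 by rewrite -lt_trunc // eq_t ltn_ord.
split; first by rewrite t0 t1.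
by move=> k; rewrite pseq_rQ // eq_t; apply/(eq_N0 N0).2.
Qed.
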